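(* Consider three sets of variables $v^\alpha,u^\alpha,w^\alpha$ ($1\le\alpha\le N$) and rational Miura transformations $v^\alpha\mapsto u^\alpha(v^*_*;\varepsilon)$ and $u^\alpha\mapsto w^\alpha(u^*_*;\varepsilon)$ such that $$\frac{\partial u^\alpha(v^*_*;\varepsilon)}{\partial v^1}=\delta^{\alpha,1},\quad\frac{\partial u^\alpha(v^*_*;\varepsilon)^{\mathrm{pol}}}{\partial v^1_x}=0,\quad\frac{\partial w^\alpha(u^*_*;\varepsilon)}{\partial u^1}=\delta^{\alpha,1},\quad\frac{\partial w^\alpha(u^*_*;\varepsilon)^{\mathrm{pol}}}{\partial u^1_x}=0.$$ Then the polynomial part of the composition $v^\alpha\mapsto w^\alpha(u^*_*(v^*_*;\varepsilon);\varepsilon)$ is equal to the composition of the polynomial parts $v^\alpha\mapsto u^\alpha(v^*_*;\varepsilon)^{\mathrm{pol}}$ and $u^\alpha\mapsto w^\alpha(u^*_*;\varepsilon)^{\mathrm{pol}}$.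
   Context: For variables $v^\alpha_k$ ($v^\alpha=v^\alpha_0$, $v^\alpha_x=v^\alpha_1$): $\mathcal A_v$ = polynomials in $v^\alpha_k$, $k>0$, over $\mathbb C[[v^1,\dots,v^N]]$, graded by $\deg v^\alpha_k=k$; $\deg\varepsilon=-1$. $\mathcal A^{\mathrm{rt},[d]}_v$: span of $\sum_{i\ge m}\frac{P_i(v^*_* )}{(v^1_x)^i}$ with $m\in\mathbb Z$, $P_i\in\mathcal A^{[d+i]}_v$, $\partial P_i/\partial v^1_x=0$ (interpreted as formal power series in $v^\alpha_n-\delta^{\alpha,1}\delta_{n,1}$); $\mathcal A^{\mathrm{rt}}_v=\bigoplus_d\mathcal A^{\mathrm{rt},[d]}_v$; polynomial part $\big(\sum_{i\ge m}P_i/(v^1_x)^i\big)^{\mathrm{pol}}=\sum_{i=m}^0P_i/(v^1_x)^i\in\mathcal A_v$; $\widehat{\mathcal A}^{\mathrm{rt}}_v=\mathcal A^{\mathrm{rt}}_v[[\varepsilon]]$, polynomial part taken coefficientwise. Tame: there is $C$ such that no $P_i$ depends on $v^\alpha_k$ with $k>C$ (for each $\varepsilon$-coefficient); $\widehat{\mathcal A}^{\mathrm{rt},\mathrm t,[d]}_v$ = tame elements of degree $d$. A rational Miura transformation is $v^\alpha\mapsto v^\alpha+\varepsilon f^\alpha(v^*_*;\varepsilon)$, $f^\alpha\in\widehat{\mathcal A}^{\mathrm{rt},\mathrm t,[1]}_v$; these form a group (composition is by substitution), and the polynomial part of a rational Miura transformation is an ordinary Miura transformation. The same notations apply to $u$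 and $w$. *)

From HB Require Import structures.
From mathcomp Require Import all_boot all_order all_algebra.
From mathcomp Require Import boolp classical_sets functions cardinality fsbigop reals.
From mathcomp Require Export complex.

Set Implicit Arguments.
Unset Strict Implicit.
Unset Printing Implicit Defensive.
Import Order.TTheory GRing.Theory Num.Theory.
Local Open Scope ring_scope.
Local Open Scope classical_set_scope.

(* N = n.+1 dependent variables v^alpha, alpha : 'I_n.+1 (ord0 is v^1).     *)
(* A jet variable v^alpha_k is a pair (alpha, k) : var.                       *)
(* An element  sum_{i>=m} P_i/(v^1_x)^i  is expanded uniquely into monomials *)
(*   prod_{(alpha,k)} (v^alpha_k)^{e(alpha,k)},                               *)
(* where e(alpha,k) >= 0 for (alpha,k) <> (1,1) and the exponent of v^1_x    *)
(* is an arbitrary integer (= -i); the v^alpha (k = 0) exponents give the    *)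
(* power-series part over C[[v^1..v^N]].  An element of \hat A^{rt}_v is      *)
(* a coefficient function  ser : nat (power of eps) -> mon -> K.             *)

Section MiuraModel.
Variable K : fieldType.
Variable n : nat.

Definition var := ('I_n.+1 * nat)%type.
Definition v1 : var := (ord0, 0%N).
Definition v1x : var := (ord0, 1%N).
Definition nextvar (x : var) : var := (x.1, x.2.+1).

Definition mon := var -> int.
Definition mon0 : mon := fun _ => 0.
Definition mon_single (y : var) (z : int) : mon := fun x => if x == y then z else 0.
Definition mon_add (a b : mon) : mon := fun x => a x + b x.
Definition mon_sub (a b : mon) : mon := fun x => a x - b x.

Definition admissible (m : mon) : Prop :=
  finite_set [set x | m x != 0] /\ (forall x, x != v1x -> 0 <= m x).

Definition weight (m : mon) : int := \sum_(x \in [set: var]) (x.2%:Z * m x).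

Definition ser := nat -> mon -> K.

Definition ser_zero : ser := fun _ _ => 0.
Definition ser_one : ser := fun j m => ((j == 0)%N && (m == mon0))%:R.
Definition ser_mono (x : var) (z : int) : ser :=
  fun j m => ((j == 0)%N && (m == mon_single x z))%:R.
Definition ser_sub (a b : ser) : ser := fun j m => a j m - b j m.

Definition ser_mul (a b : ser) : ser := fun j m =>
  \sum_(p \in [set p : nat * mon | (p.1 <= j)%N])
     (a p.1 p.2 * b (j - p.1)%N (mon_sub m p.2)).

Definition ser_pow (a : ser) (k : nat) : ser := iter k (ser_mul a) ser_one.

(* total x-derivative: d/dx v^alpha_k = v^alpha_{k+1} *)
Definition ser_D (a : ser) : ser := fun j m =>
  \sum_(x \in [set: var])
     ((m x + 1)%:~R * a j (mon_add m (mon_sub (mon_single x 1) (mon_single (nextvar x) 1)))).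

Definition dpart (x : var) (a : ser) : ser := fun j m =>
  (m x + 1)%:~R * a j (mon_add m (mon_single x 1)).

(* inverse of an element a = v^1_x + O(eps):
   1/(v^1_x + h) = sum_k (-1)^k h^k (v^1_x)^(-k-1), eps-adically convergent *)
Definition inv_v1x (a : ser) : ser := fun j m =>
  \sum_(k < j.+1)
     ((-1) ^+ k * ser_mul (ser_mono v1x (- (k.+1)%:Z))
                          (ser_pow (ser_sub a (ser_mono v1x 1)) k) j m).

Definition ser_ipow (a : ser) (z : int) : ser :=
  match z with
  | Posz k => ser_pow a k
  | Negz k => ser_pow (inv_v1x a) k.+1
  end.

Definition pol (a : ser) : ser := fun j m => if 0 <= m v1x then a j m else 0.

(* a is in \hat A^{rt,[d]} (deg eps = -1): eps^j-coefficient has degree d+j *)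
Definition in_Art (d : int) (a : ser) : Prop :=
  forall j m, a j m != 0 -> admissible m /\ weight m = d + j%:Z.

Definition tame (a : ser) : Prop :=
  forall j, exists C : nat, forall m, a j m != 0 ->
    forall x : var, x != v1x -> (C < x.2)%N -> m x = 0.

(* rational Miura transformation v^alpha |-> u^alpha = v^alpha + eps f^alpha,
   f^alpha in \hat A^{rt,t,[1]}; u alpha is the element u^alpha(v;eps) *)
Definition rat_miura (u : 'I_n.+1 -> ser) : Prop :=
  forall alpha,
    [/\ (forall m, u alpha 0%N m = (m == mon_single (alpha, 0%N) 1)%:R),
        in_Art 1 (fun j => u alpha j.+1) & tame (fun j => u alpha j.+1)].

(* image of the jet variable v^alpha_k under v^beta |-> u^beta : d^k u^alpha *)
Definition img (u : 'I_n.+1 -> ser) (x : var) : ser := iter x.2 ser_D (u x.1).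

Definition img_mon (u : 'I_n.+1 -> ser) (e : mon) : ser :=
  \big[ser_mul/ser_one]_(x \in [set: var]) ser_ipow (img u x) (e x).

Definition subst (u : 'I_n.+1 -> ser) (g : ser) : ser := fun j m =>
  \sum_(p \in [set p : nat * mon | (p.1 <= j)%N])
     (g p.1 p.2 * img_mon u p.2 (j - p.1)%N m).

Definition miura_comp (u w : 'I_n.+1 -> ser) : 'I_n.+1 -> ser :=
  fun alpha => subst u (w alpha).

Definition miura_pol (u : 'I_n.+1 -> ser) : 'I_n.+1 -> ser :=
  fun alpha => pol (u alpha).

Definition kdelta1 (alpha : 'I_n.+1) : ser :=
  if alpha == ord0 then ser_one else ser_zero.

End MiuraModel.

From HB Require Import structures.
From mathcomp Require Import all_boot all_order all_algebra.
From mathcomp Require Import boolp classical_sets cardinality fsbigop reals complex.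
From mathcomp Require Import zify.

(* Under the hypotheses on [u], every [u^alpha] is [v^alpha] plus eps-corrections that
   contain no [v^1] and only non-positive powers of [v^1_x] ([jet_image]).  This shape
   survives d/dx, which turns [v^1] into [v^1_x]: the image of every jet variable other
   than [v^1_x] has non-positive [v^1_x]-degree, and the image of [v^1_x] is [v^1_x] plus
   such a series.  On series of non-positive [v^1_x]-degree the polynomial part is the
   projection onto degree zero, hence multiplicative, and on images of jet variables it
   commutes with d/dx.  So a monomial of [w] with a negative power of [u^1_x] is sent to
   a series of negative [v^1_x]-degree, invisible in the polynomial part, while on the
   other monomials of [w] (free of [u^1_x] by the hypothesis on [w]) the polynomial part
   commutes with the substitution. *)

Set Implicit Arguments.
Unset Strict Implicit.
Unset Printing Implicit Defensive.
Import Order.TTheory GRing.Theory Num.Theory.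
Local Open Scope ring_scope.
Local Open Scope classical_set_scope.

Lemma fsum_neq0 (R : nmodType) (T : choiceType) (A : set T) (F : T -> R) :
  \sum_(i \in A) F i != 0 -> exists2 i, A i & F i != 0.
Proof. exact: (fsbigN1 (f := fun (_ : unit) => F) (x := tt)). Qed.

Lemma fsum_if (R : nmodType) (T : choiceType) (A : set T) (c : bool) (F G : T -> R) :
  (forall i, A i -> G i = if c then F i else 0) ->
  \sum_(i \in A) G i = if c then \sum_(i \in A) F i else 0.
Proof.
by case: c => GE; [apply: eq_fsbigr => i; rewrite inE => /GE | apply: fsbig1 => i /GE].
Qed.

Section PolynomialPartOfSubstitution.
Variables (K : numFieldType) (n : nat).
Local Notation ser := (ser K n).
Local Notation mon := (mon n).
Local Notation var := (var n).
Local Notation one := (@ser_one K n).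
Local Notation V1 := (v1 n).
Local Notation X1 := (v1x n).
Local Notation evar x := (mon_single x 1).
Local Notation mon_shift m y := (mon_add m (mon_sub (evar y) (evar (nextvar y)))).

Lemma ser_mul_neq0 (a b : ser) j m : ser_mul a b j m != 0 ->
  exists2 p : nat * mon, (p.1 <= j)%N & a p.1 p.2 != 0 /\ b (j - p.1)%N (mon_sub m p.2) != 0.
Proof. by case/fsum_neq0 => p ? /[!mulf_eq0] /norP[]; exists p. Qed.

Lemma nextvar_neq_v1 (y : var) : (nextvar y == V1) = false.
Proof. by case: y => a k; rewrite /nextvar /= xpair_eqE andbF. Qed.

Lemma nextvar_eq_v1x (y : var) : (nextvar y == X1) = (y == V1).
Proof. by case: y => a k; rewrite /nextvar /= !xpair_eqE. Qed.

Lemma nextvar_neq (y : var) : (y == nextvar y) = false.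
Proof. by case: y => a k; rewrite /nextvar /= xpair_eqE eqxx ltn_eqF. Qed.

Lemma v1_neq_v1x : (V1 == X1) = false. Proof. by []. Qed.

Lemma mon_shift_self (m : mon) (x : var) : (mon_shift m x == evar x) = (m == evar (nextvar x)).
Proof.
apply/eqP/eqP => [E | ->]; apply/funext => z; last first.
  by rewrite /mon_add /mon_sub /mon_single; case: (z == x); case: (z == nextvar x); lia.
have := congr1 (fun f => f z) E; rewrite /mon_add /mon_sub /mon_single.
by case: (z == x); case: (z == nextvar x); lia.
Qed.

Lemma mon_shift_eq_evar (m : mon) (x y : var) :
  y <> x -> mon_shift m y = evar x -> m y + 1 = 0.
Proof.
move=> /eqP/negbTE yx /(congr1 (fun f => f y)).
by rewrite /mon_add /mon_sub /mon_single eqxx yx nextvar_neq subr0.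
Qed.

Lemma mon_shift_v1 (m : mon) (y : var) : mon_shift m y V1 = m V1 + (if y == V1 then 1 else 0).
Proof.
by rewrite /mon_add /mon_sub /mon_single (eq_sym V1 (nextvar y)) nextvar_neq_v1 (eq_sym V1) subr0.
Qed.

Lemma mon_shift_v1x (m : mon) (y : var) :
  mon_shift m y X1 = m X1 + ((if y == X1 then 1 else 0) - (if y == V1 then 1 else 0)).
Proof.
by rewrite /mon_add /mon_sub /mon_single (eq_sym X1 (nextvar y)) nextvar_eq_v1x (eq_sym X1).
Qed.

Definition exp_le (x : var) (z : int) (a : ser) := forall j m, a j m != 0 -> m x <= z.

Definition exp0_ge (x : var) (z : int) (a : ser) := forall m, a 0%N m != 0 -> z <= m x.

Lemma exp_le_trans x z z' a : z <= z' -> exp_le x z a -> exp_le x z' a.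
Proof. by move=> le_zz' Ha j m /Ha /le_trans; apply. Qed.

Lemma exp_le_one x : exp_le x 0 one.
Proof.
by move=> j m; rewrite /ser_one; case: (m =P @mon0 n) => [-> | _]; rewrite ?andbF ?eqxx.
Qed.

Lemma exp_le_mul x z1 z2 a b :
  exp_le x z1 a -> exp_le x z2 b -> exp_le x (z1 + z2) (ser_mul a b).
Proof.
move=> Ha Hb j m /ser_mul_neq0 [p _ [/Ha ha /Hb hb]].
by move: ha hb; rewrite /mon_sub; lia.
Qed.

Lemma exp_le_pow x z a k : exp_le x z a -> exp_le x (k%:Z * z) (ser_pow a k).
Proof.
move=> Ha; elim: k => [|k IH]; first by rewrite mul0r; exact: exp_le_one.
by rewrite intS mulrDl mul1r /ser_pow iterS; exact: exp_le_mul.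
Qed.

Lemma exp_le_prod x (s : seq var) (F : var -> ser) (z : var -> int) :
  (forall y, y \in s -> exp_le x (z y) (F y)) ->
  exp_le x (\sum_(y <- s) z y) (\big[(@ser_mul K n)/one]_(y <- s) F y).
Proof.
elim: s => [_ | y s IH Hs]; first by rewrite !big_nil; exact: exp_le_one.
rewrite !big_cons; apply: exp_le_mul; first by apply: Hs; exact: mem_head.
by apply: IH => y' y's; apply: Hs; rewrite inE y's orbT.
Qed.

Lemma exp_le_mono x z : exp_le x z (ser_mono K x z).
Proof.
move=> j m; rewrite /ser_mono; case: (m =P mon_single x z) => [-> _ | _].
  by rewrite /mon_single eqxx.
by rewrite andbF mulr0n eqxx.
Qed.

Lemma exp_le_inv_v1x a :
  exp_le X1 0 (ser_sub a (ser_mono K X1 1)) -> exp_le X1 (-1) (inv_v1x a).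
Proof.
move=> Ha j m; apply: contraNT; rewrite -ltNge => m_gt; apply/eqP/big1 => k _.
apply/eqP; rewrite mulf_eq0; apply/orP; right; apply: contraTT m_gt.
move/(exp_le_mul (@exp_le_mono X1 _) (exp_le_pow (k := k) Ha)); rewrite mulr0 addr0; lia.
Qed.

Lemma exp_le_ipow_neg a k :
  exp_le X1 0 (ser_sub a (ser_mono K X1 1)) -> exp_le X1 (Negz k) (ser_ipow a (Negz k)).
Proof. by move/exp_le_inv_v1x/(exp_le_pow (k := k.+1)); rewrite NegzE mulrN1. Qed.

Lemma exp0_ge_one x : exp0_ge x 0 one.
Proof.
by move=> m; rewrite /ser_one /=; case: (m =P @mon0 n) => [-> | _]; rewrite ?mulr0n ?eqxx.
Qed.

Lemma exp0_ge_mul x z1 z2 a b :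
  exp0_ge x z1 a -> exp0_ge x z2 b -> exp0_ge x (z1 + z2) (ser_mul a b).
Proof.
move=> Ha Hb m /ser_mul_neq0 [[i p]]; rewrite leqn0 => /eqP /= -> [/Ha ha /Hb hb].
by move: ha hb; rewrite /mon_sub; lia.
Qed.

Lemma exp0_ge_pow x z a k : exp0_ge x z a -> exp0_ge x (k%:Z * z) (ser_pow a k).
Proof.
move=> Ha; elim: k => [|k IH]; first by rewrite mul0r; exact: exp0_ge_one.
by rewrite intS mulrDl mul1r /ser_pow iterS; exact: exp0_ge_mul.
Qed.

Lemma ser_pow_neq1 x a k : exp0_ge x 1 a -> ser_pow a k.+1 != one.
Proof.
move=> /(exp0_ge_pow (k := k.+1)) /(_ (@mon0 n)) Hpow; apply/eqP => pow_one.
by move: Hpow; rewrite pow_one /ser_one !eqxx mulr1n oner_eq0 /mon0 mulr1 => /(_ isT).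
Qed.

Lemma polE (a : ser) j (m : mon) : pol a j m = if 0 <= m X1 then a j m else 0.
Proof. by []. Qed.

Lemma pol_one : pol one = one.
Proof.
apply/funext => j; apply/funext => m; rewrite polE; case: ifP => // m_lt0.
by rewrite /ser_one; case: (m =P @mon0 n) m_lt0 => [-> | _]; rewrite ?andbF.
Qed.

Lemma pol_mul a b :
  exp_le X1 0 a -> exp_le X1 0 b -> pol (ser_mul a b) = ser_mul (pol a) (pol b).
Proof.
move=> Ha Hb; apply/funext => j; apply/funext => m; rewrite polE; symmetry.
apply: fsum_if => p _; rewrite !polE.
have [-> | /Ha ha] := eqVneq (a p.1 p.2) 0; first by rewrite !(mul0r, if_same).
have [-> | /Hb hb] := eqVneq (b (j - p.1)%N (mon_sub m p.2)) 0; first by rewrite !(mulr0, if_same).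
have -> : (0 <= m X1) = (0 <= p.2 X1) && (0 <= mon_sub m p.2 X1).
  by rewrite /mon_sub in hb *; apply/idP/andP => [? | []]; [split|]; lia.
by case: (0 <= p.2 X1); case: (0 <= _); rewrite ?(mul0r, mulr0).
Qed.

Lemma pol_pow a k : exp_le X1 0 a -> pol (ser_pow a k) = ser_pow (pol a) k.
Proof.
move=> Ha; elim: k => [|k IH]; first exact: pol_one.
rewrite /ser_pow !iterS -!/(ser_pow _ k) pol_mul ?IH //.
by have := exp_le_pow (k := k) Ha; rewrite mulr0.
Qed.

Definition jet_image (x : var) (a : ser) :=
  (forall m, a 0%N m = (m == evar x)%:R) /\
  (forall j m, (0 < j)%N -> a j m != 0 -> m X1 <= 0 /\ m V1 = 0).

Lemma jet_image_exp_v1_eq0 x a j m : jet_image x a -> a j m != 0 -> m X1 < 0 -> m V1 = 0.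
Proof.
case=> a0 a_corr; case: j => [|j]; last by case/(a_corr _ _ (ltn0Sn j)).
by rewrite a0; case: (m =P evar x) => [-> | _]; rewrite ?mulr0n ?eqxx // /mon_single; case: ifP.
Qed.

Lemma jet_image_exp_le x a : jet_image x a -> x != X1 -> exp_le X1 0 a.
Proof.
case=> a0 a_corr x_neq [|j] m; last by case/(a_corr _ _ (ltn0Sn j)).
rewrite a0; case: (m =P evar x) => [-> _ | _]; last by rewrite mulr0n eqxx.
by rewrite /mon_single eq_sym (negbTE x_neq).
Qed.

Lemma jet_image_v1x_sub a : jet_image X1 a -> exp_le X1 0 (ser_sub a (ser_mono K X1 1)).
Proof.
case=> a0 a_corr [|j] m; rewrite /ser_sub /ser_mono /=.
  by rewrite a0 subrr eqxx.
by rewrite subr0 => /(a_corr _ _ (ltn0Sn j)) [].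
Qed.

Lemma jet_image_exp0_ge x a : jet_image x a -> exp0_ge x 1 a.
Proof.
case=> a0 _ m; rewrite a0; case: (m =P evar x) => [-> _ | _]; last by rewrite mulr0n eqxx.
by rewrite /mon_single eqxx.
Qed.

Lemma jet_image_pol x a : jet_image x a -> jet_image x (pol a).
Proof.
case=> a0 a_corr; split=> [m | j m j_gt0]; rewrite polE; last first.
  by case: ifP => _; [exact: a_corr | rewrite eqxx].
rewrite a0; case: (m =P evar x) => [-> | _]; last by rewrite if_same.
by rewrite /mon_single; case: (X1 == x).
Qed.

Lemma jet_image_D x a : jet_image x a -> jet_image (nextvar x) (ser_D a).
Proof.
case=> a0 a_corr; split=> [m | j m j_gt0].
- rewrite /ser_D -(fsbig_widen [set x]) // => [|y [_ /= y_neq]]; last first.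
    rewrite /= a0; case: eqP => [/(mon_shift_eq_evar y_neq) -> | _].
      by rewrite mul0r.
    by rewrite mulr0n mulr0.
  rewrite fsbig_set1 a0 mon_shift_self; case: eqP => [-> | _]; last by rewrite mulr0n mulr0.
  by rewrite /mon_single nextvar_neq add0r mulr1.
- case/fsum_neq0 => y _ /[!mulf_eq0] /norP[y_ok /(a_corr _ _ j_gt0)].
  rewrite mon_shift_v1x mon_shift_v1; case: (y =P V1) y_ok => [-> | _] y_ok [x1_le v1_eq].
    by move: y_ok; rewrite v1_eq eqxx.
  by move: x1_le v1_eq; case: (y == X1); split; lia.
Qed.

Lemma jet_image_shift_sign x a j m y : jet_image x a ->
  a j (mon_shift m y) != 0 -> m y + 1 != 0 -> (0 <= mon_shift m y X1) = (0 <= m X1).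
Proof.
move=> ax /(jet_image_exp_v1_eq0 ax); rewrite mon_shift_v1x mon_shift_v1.
case: (y =P V1) => [-> | _]; first by rewrite v1_neq_v1x => coef y_neq; apply/idP/idP; lia.
by case: (y =P X1) => [-> | _] _ ?; apply/idP/idP; lia.
Qed.

Lemma pol_D x a : jet_image x a -> pol (ser_D a) = ser_D (pol a).
Proof.
move=> ax; apply/funext => j; apply/funext => m; rewrite polE; symmetry.
apply: fsum_if => y _; rewrite polE.
have [-> | a_neq0] := eqVneq (a j (mon_shift m y)) 0; first by rewrite !(mulr0, if_same).
have [-> | y_neq] := eqVneq (m y + 1) 0; first by rewrite mulr0z !(mul0r, if_same).
by rewrite (jet_image_shift_sign ax a_neq0 y_neq); case: ifP; rewrite ?mulr0.
Qed.

Lemma imgS (u : 'I_n.+1 -> ser) al k : img u (al, k.+1) = ser_D (img u (al, k)).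
Proof. by []. Qed.

Lemma jet_image_img (u : 'I_n.+1 -> ser) x :
  (forall al, jet_image (al, 0%N) (u al)) -> jet_image x (img u x).
Proof.
move=> u_jet; case: x => al k; elim: k => [|k IH]; first exact: u_jet.
by rewrite imgS; exact: (jet_image_D IH).
Qed.

Lemma pol_img (u : 'I_n.+1 -> ser) x : (forall al, jet_image (al, 0%N) (u al)) ->
  pol (img u x) = img (miura_pol u) x.
Proof.
move=> u_jet; case: x => al k; elim: k => [// | k IH].
by rewrite !imgS (pol_D (jet_image_img (al, k) u_jet)) IH.
Qed.

Lemma dpart_mon_sub x (a : ser) j m : dpart x a j (mon_sub m (evar x)) = (m x)%:~R * a j m.
Proof.
rewrite /dpart; have -> : mon_add (mon_sub m (evar x)) (evar x) = m.
  by apply/funext => z; rewrite /mon_add /mon_sub subrK.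
by rewrite /mon_sub /mon_single eqxx subrK.
Qed.

Lemma exp_le_v1x_of_dpart_pol a : dpart X1 (pol a) = @ser_zero K n -> exp_le X1 0 a.
Proof.
move=> pol_v1x j m a_neq0; rewrite leNgt; apply/negP => m_gt0.
have /eqP := congr1 (fun f => f j (mon_sub m (evar X1))) pol_v1x.
by rewrite /= dpart_mon_sub polE (ltW m_gt0) mulf_eq0 intr_eq0 (negbTE a_neq0) orbF gt_eqF.
Qed.

Lemma exp_v1_eq0_of_dpart_v1 a al :
  dpart V1 a = @kdelta1 K n al -> forall j m, (0 < j)%N -> a j m != 0 -> m V1 = 0.
Proof.
move=> a_v1 j m j_gt0 a_neq0; have /eqP := congr1 (fun f => f j (mon_sub m (evar V1))) a_v1.
have -> : @kdelta1 K n al j (mon_sub m (evar V1)) = 0.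
  by rewrite /kdelta1; case: ifP => _ //; rewrite /ser_one (gtn_eqF j_gt0).
by rewrite /= dpart_mon_sub mulf_eq0 intr_eq0 (negbTE a_neq0) orbF => /eqP.
Qed.

Lemma admissible_evar (x : var) : admissible (evar x).
Proof.
split=> [|z _]; last by rewrite /mon_single; case: ifP.
apply: sub_finite_set (finite_set1 x) => z /=.
by rewrite /mon_single; case: (z =P x) => [// | _]; rewrite eqxx.
Qed.

Lemma rat_miura_admissible (u : 'I_n.+1 -> ser) al j m :
  rat_miura u -> u al j m != 0 -> admissible m.
Proof.
case/(_ al) => u0 u_corr _; case: j => [|j]; last by case/u_corr.
rewrite u0; case: (m =P evar (al, 0%N)) => [-> _ | _]; first exact: admissible_evar.
by rewrite mulr0n eqxx.
Qed.

Lemma rat_miura_jet_image (u : 'I_n.+1 -> ser) : rat_miura u ->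
  (forall al, dpart V1 (u al) = @kdelta1 K n al) ->
  (forall al, dpart X1 (pol (u al)) = @ser_zero K n) ->
  forall al, jet_image (al, 0%N) (u al).
Proof.
move=> u_miura u_v1 u_v1x al; have [u0 _ _] := u_miura al; split=> // j m j_gt0 u_neq0.
split; first exact: exp_le_v1x_of_dpart_pol (u_v1x al) _ _ u_neq0.
exact: exp_v1_eq0_of_dpart_v1 (u_v1 al) _ _ j_gt0 u_neq0.
Qed.

Lemma img_mon_exp_lt0 (u : 'I_n.+1 -> ser) e : (forall al, jet_image (al, 0%N) (u al)) ->
  admissible e -> e X1 < 0 -> exp_le X1 (e X1) (img_mon u e).
Proof.
move=> u_jet [e_fin e_ge0] eX1_lt0; rewrite /img_mon.
set F := fun x => ser_ipow (img u x) (e x).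
have FX1 : exp_le X1 (e X1) (F X1).
  rewrite /F; case: (e X1) eX1_lt0 => [// | k _].
  exact/exp_le_ipow_neg/jet_image_v1x_sub/jet_image_img.
have X1_supp : X1 \in finite_support one [set: var] F.
  rewrite in_finite_support ?inE; last first.
    apply: sub_finite_set e_fin => x [_ /= F_neq].
    by apply/eqP => ex0; apply: F_neq; rewrite /F ex0.
  split=> //= FX1_one; have := FX1 0%N (@mon0 n).
  by rewrite FX1_one /ser_one !eqxx mulr1n oner_eq0 /mon0 => /(_ isT); lia.
apply: exp_le_trans (exp_le_prod (z := fun x => if x == X1 then e X1 else 0) _).
  rewrite (big_rem X1 X1_supp) eqxx big1_seq /= ?addr0 // => y.
  by rewrite mem_rem_uniq ?finite_support_uniq // => /andP[/negbTE ->].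
move=> x _; case: (x =P X1) => [-> // | /eqP x_neq].
have := e_ge0 x x_neq; rewrite /F; case: (e x) => [k _ | //].
have := jet_image_exp_le (jet_image_img x u_jet) x_neq.
by move/(exp_le_pow (k := k)); rewrite mulr0.
Qed.

Lemma img_mon_support (u : 'I_n.+1 -> ser) e :
  (forall al, jet_image (al, 0%N) (u al)) -> (forall x, 0 <= e x) ->
  (fun x => ser_ipow (img u x) (e x)) @^-1` [set~ one] = [set x | e x != 0].
Proof.
move=> u_jet e_ge0; apply/seteqP; split=> x /=.
  by move=> F_neq; apply/eqP => ex0; apply: F_neq; rewrite ex0.
case: (e x) (e_ge0 x) => [[|k] | //] _ // _.
exact/eqP/ser_pow_neq1/jet_image_exp0_ge/jet_image_img.
Qed.

Lemma img_mon_pol (u : 'I_n.+1 -> ser) e : (forall al, jet_image (al, 0%N) (u al)) ->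
  admissible e -> e X1 = 0 -> pol (img_mon u e) = img_mon (miura_pol u) e.
Proof.
move=> u_jet [_ e_ge0'] eX1_0.
have e_ge0 x : 0 <= e x by case: (x =P X1) => [-> | /eqP /e_ge0' //]; rewrite eX1_0.
have pol_u_jet al : jet_image (al, 0%N) (miura_pol u al) by exact: jet_image_pol.
rewrite /img_mon /finite_support.
rewrite (img_mon_support u_jet e_ge0) (img_mon_support pol_u_jet e_ge0).
apply: proj2 (big_ind2 (fun a b => exp_le X1 0 a /\ pol a = b) _ _ _).
- by split; [exact: exp_le_one | exact: pol_one].
- move=> a1 b1 a2 b2 [a1_le <-] [a2_le <-]; split; last exact: pol_mul.
  by rewrite -[0]addr0; exact: exp_le_mul.
- move=> x _; case: (x =P X1) => [-> | /eqP x_neq].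
    by rewrite eX1_0; split; [exact: exp_le_one | exact: pol_one].
  have := e_ge0 x; case: (e x) => [k _ | //] /=.
  have ax_le := jet_image_exp_le (jet_image_img x u_jet) x_neq.
  split; last by rewrite pol_pow // pol_img.
  by have := exp_le_pow (k := k) ax_le; rewrite mulr0.
Qed.

Lemma pol_subst (u : 'I_n.+1 -> ser) g : (forall al, jet_image (al, 0%N) (u al)) ->
  (forall j m, g j m != 0 -> admissible m) -> exp_le X1 0 g ->
  pol (subst u g) = subst (miura_pol u) (pol g).
Proof.
move=> u_jet g_adm g_le; apply/funext => j; apply/funext => m; rewrite polE; symmetry.
apply: fsum_if => -[i e] _ /=; rewrite polE.
have [-> | g_neq0] := eqVneq (g i e) 0; first by rewrite !(mul0r, if_same).
have e_adm := g_adm _ _ g_neq0.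
have [eX1_lt0 | eX1_ge0] := ltP (e X1) 0.
  rewrite mul0r; case: ifP => // m_ge0.
  have [-> | /(img_mon_exp_lt0 u_jet e_adm eX1_lt0)] := eqVneq (img_mon u e (j - i)%N m) 0.
    by rewrite mulr0.
  by move: m_ge0 eX1_lt0; lia.
have eX1_0 : e X1 = 0 by apply/eqP; rewrite eq_le eX1_ge0 (g_le _ _ g_neq0).
by rewrite -img_mon_pol // polE; case: ifP; rewrite ?mulr0.
Qed.

End PolynomialPartOfSubstitution.

Theorem lemma7p4 (R : realType) (n : nat) (u w : 'I_n.+1 -> ser R[i] n) :
  rat_miura u -> rat_miura w ->
  (forall alpha, dpart (v1 n) (u alpha) = @kdelta1 R[i] n alpha) ->
  (forall alpha, dpart (v1x n) (pol (u alpha)) = @ser_zero R[i] n) ->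
  (forall alpha, dpart (v1 n) (w alpha) = @kdelta1 R[i] n alpha) ->
  (forall alpha, dpart (v1x n) (pol (w alpha)) = @ser_zero R[i] n) ->
  miura_pol (miura_comp u w) = miura_comp (miura_pol u) (miura_pol w).
Proof.
move=> u_miura w_miura u_v1 u_v1x _ w_v1x.
apply/funext => alpha; apply: pol_subst.
- exact: rat_miura_jet_image.
- by move=> j m; apply: rat_miura_admissible.
- exact: exp_le_v1x_of_dpart_pol.
Qed.
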